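(* Let $l\in\mathbb{N}$ and $k_1,\dots,k_l\in\mathbb{N}$ with $k_j\mid k_{j-1}$ for $j=2,\dots,l$. Let $M\subset\mathbb{N}$ be the finite set with $\Lambda_{k_1}-\Lambda_{k_2}+\dots+(-1)^{l-1}\Lambda_{k_l}=\sum_{m\in M}\Psi_m$. Then $M$ is either empty, or it satisfies both of the following: (1) $M$ contains a largest number $m_1$, and $\mathcal{G}(M)$ is a directed graph with root $m_1$, i.e. every vertex of $\mathcal{G}(M)$ can be reached from $m_1$ by a directed path; (2) there is a directed path in $\mathcal{G}(M)$ consisting only of $2$-edges which contains a vertex of every $2$-plane of $\mathcal{G}(M)$.
   Context: $\mathbb{Q}\langle S^{UR}\rangle$ is the group ring over $\mathbb{Q}$ of the group of roots of unity, with elements $\sum b_j\langle\zeta_j\rangle$; $\Lambda_m=\sum_{a=0}^{m-1}\langle e^{2\pi i a/m}\rangle$ and $\Psi_m=\sum_{\zeta\text{ of order }m}\langle\zeta\rangle$, so $\Lambda_k=\sum_{m\mid k}\Psi_m$. For a finite set $M\subset\mathbb{N}$ the directed graph $\mathcal{G}(M)$ has vertex set $M$, and there is a directed edge from $m_1\in M$ to $m_2\in M$ iff $m_1/m_2=p^e$ for some prime $p$ and some $e\ge1$ and there is no $m_3\in M\setminus\{m_1,m_2\}$ with $m_2\mid m_3\mid m_1$; such an edge is labelled $p$ and called a $p$-edge. For a prime $p$, the $p$-planes of $\mathcal{G}(M)$ are the connected components of the graph obtained from $\mathcal{G}(M)$ by deleting all $p$-edges. *)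

From Stdlib Require Import Relations.
From mathcomp Require Import all_boot all_order all_algebra all_field.
Set Implicit Arguments. Unset Strict Implicit. Unset Printing Implicit Defensive.
Import Order.TTheory GRing.Theory Num.Theory.
Local Open Scope ring_scope.

(* Elements of the group ring Q<S^UR> are represented by their coefficient
   functions algC -> rat (coefficient of <zeta>; zero off the roots of unity
   for all elements considered here).  algC contains all roots of unity. *)
Definition grpring := algC -> rat.

(* Lambda_m = sum_{a<m} <e^{2 pi i a/m}> : coefficient 1 at the m-th roots of unity *)
Definition Lambda (m : nat) : grpring :=
  fun z => if (0 < m)%N && (z ^+ m == 1) then 1%R else 0%R.

Definition Psi (m : nat) : grpring :=
  fun z => if m.-primitive_root z then 1%R else 0%R.

Definition pedge (M : seq nat) (p m1 m2 : nat) : Prop :=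
  [/\ m1 \in M, m2 \in M, prime p,
      (exists2 e, (0 < e)%N & m1 = (m2 * p ^ e)%N)
    & forall m3, m3 \in M -> m3 <> m1 -> m3 <> m2 -> ~ ((m2 %| m3)%N /\ (m3 %| m1)%N)].

Definition gedge (M : seq nat) (m1 m2 : nat) : Prop := exists p, pedge M p m1 m2.

Definition reachable (M : seq nat) (u v : nat) : Prop :=
  clos_refl_trans nat (gedge M) u v.

Definition same_pplane (M : seq nat) (p u v : nat) : Prop :=
  clos_refl_sym_trans nat (fun a b => exists2 q, q <> p & pedge M q a b) u v.

Definition ppath (M : seq nat) (p : nat) (s : seq nat) : Prop :=
  [/\ s <> [::], all (fun v => v \in M) s
    & forall i, (i.+1 < size s)%N -> pedge M p (nth 0%N s i) (nth 0%N s i.+1)].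

From Stdlib Require Import Relations.
From mathcomp Require Import all_boot all_order all_algebra all_field zify.
Import Order.TTheory GRing.Theory Num.Theory.
Set Implicit Arguments. Unset Strict Implicit. Unset Printing Implicit Defensive.

(* Comparing coefficients at a primitive u-th root of unity shows that u lies in M
   exactly when the number ndvd k u of the k_j divisible by u is odd.  As the k_j
   form a divisibility chain, ndvd k (lcm a b) = min (ndvd k a) (ndvd k b), and
   ndvd k (v q) = ndvd k (v q_p) for some prime p | q, q_p the p-part of q.
   For a prime r, call the elements of M with a given r-adic valuation an r-level.
   If v is not the largest element t of its r-level, applying this to
   q = lcm(t, v) / v, which is prime to r, gives v p^e in M for some prime p <> r;
   for the least such e there is a p-edge from v p^e to v, and induction on t - v
   shows that t reaches all of its r-level without using r-edges.  For r larger
   than every element of M this yields the root m1 = max M.  For r = 2 every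
   2-level lies in one 2-plane, and an odd o minimizing ndvd k among 1 and the odd
   elements of M satisfies 2^a o in M for every nonempty 2-level a; these
   elements, in decreasing order, form the required path of 2-edges. *)

Lemma dvdn_mul_pfactor_mid v p e m : prime p -> 0 < v -> v %| m -> m %| v * p ^ e ->
  exists2 c, c <= e & m = v * p ^ c.
Proof.
move=> p_pr v_pos /dvdnP[q ->]; rewrite mulnC dvdn_pmul2l //.
by case/(dvdn_pfactor _ _ p_pr) => c le_ce ->; exists c.
Qed.

Lemma dvdn_mul_parts v q x p0 : 0 < v -> p0 \in primes q ->
  (forall p, p \in primes q -> v * q`_p %| x) -> v * q %| x.
Proof.
move=> v_pos p0q dvd_x; have q_pos : 0 < q by move: p0q; rewrite mem_primes => /and3P[].
apply/dvdn_partP => [|p _]; first by rewrite muln_gt0 v_pos.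
rewrite partnM //; case: (boolP (p \in primes q)) => [pq | pNq].
  exact: dvdn_trans (dvdn_mul (dvdn_part _ _) (dvdnn _)) (dvd_x p pq).
rewrite (@part_p'nat p q) ?p'natEpi // muln1.
apply: dvdn_trans (dvdn_part _ _) (dvdn_trans (dvdn_mulr _ _) (dvd_x p0 p0q)).
by rewrite dvdnn.
Qed.

Lemma logn2_pow2_mul a o : odd o -> logn 2 (2 ^ a * o) = a.
Proof.
move=> odd_o; rewrite lognM ?expn_gt0 ?(odd_gt0 odd_o) // pfactorK //.
by rewrite logn_coprime ?addn0 ?coprime2n.
Qed.

Lemma odd_part_pow2_mul a o : odd o -> (2 ^ a * o)`_2^' = o.
Proof.
move=> odd_o; rewrite partnM ?expn_gt0 ?(odd_gt0 odd_o) // partnX.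
rewrite (@part_p'nat _ 2) ?pnatNK ?pnat_id // exp1n mul1n part_pnat_id //.
by rewrite p'natE // dvdn2 negbK.
Qed.

Lemma odd_part_decomp v : 0 < v -> v = 2 ^ logn 2 v * v`_2^' /\ odd v`_2^'.
Proof.
move=> v_pos; split; first by rewrite -p_part partnC.
by rewrite -coprime2n prime_coprime // -p'natE // part_pnat.
Qed.

Lemma exists_extremum (T : eqType) (leT : rel T) (s : seq T) x0 :
  transitive leT -> total leT -> x0 \in s ->
  exists2 x, x \in s & forall y, y \in s -> leT x y.
Proof.
move=> leT_tr leT_total x0s.
case E: (sort leT s) => [|x s']; first by move: x0s; rewrite -(mem_sort leT) E.
have := sort_sorted leT_total s; rewrite E /= => /(order_path_min leT_tr)/allP min_x.
exists x => [|y]; first by rewrite -(mem_sort leT) E mem_head.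
rewrite -(mem_sort leT) E inE => /predU1P[-> | /min_x //].
by case/orP: (leT_total x x).
Qed.

Lemma geq_trans : transitive geq.
Proof. by move=> n m p le_nm le_pn; apply: leq_trans le_pn le_nm. Qed.

Lemma geq_total : total geq.
Proof. by move=> m n; apply: leq_total. Qed.

Lemma sorted_geq_nth (s : seq nat) i j : sorted geq s -> i <= j -> j < size s ->
  nth 0 s j <= nth 0 s i.
Proof.
move=> s_sorted le_ij lt_js.
exact: (sorted_leq_nth geq_trans leqnn 0 s_sorted i j (leq_ltn_trans le_ij lt_js) lt_js le_ij).
Qed.

Lemma sorted_geq_gap (s : seq nat) i x : sorted geq s -> i.+1 < size s -> x \in s ->
  (nth 0 s i.+1 < x < nth 0 s i) = false.
Proof.
move=> s_sorted lt_is xs; rewrite -(nth_index 0 xs).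
have lt_xs : index x s < size s by rewrite index_mem.
case: (leqP (index x s) i) => [le_xi | lt_ix].
  have := sorted_geq_nth s_sorted le_xi (ltnW lt_is).
  by rewrite [_ < nth 0 s i]ltnNge => ->; rewrite andbF.
by rewrite ltnNge sorted_geq_nth.
Qed.

Lemma clos_rt_incl (A : Type) (R S : relation A) :
  inclusion A R S -> inclusion A (clos_refl_trans A R) (clos_refl_trans A S).
Proof.
move=> RS x y; elim=> [a b /RS|a|a b c _ ab _ bc]; first exact: rt_step.
  exact: rt_refl.
exact: rt_trans ab bc.
Qed.

(* For a divisibility chain [k] this counts all the [k_j] divisible by [u]. *)
Definition ndvd (k : seq nat) (u : nat) : nat := find (fun x => ~~ (u %| x)) k.

Lemma ndvd_le_size k u : ndvd k u <= size k.
Proof. exact: find_size. Qed.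

Section DivisorChain.

Variable k : seq nat.
Hypothesis k_chain : sorted (fun a b => b %| a) k.

Lemma dvdn_nth_chain i j : i <= j -> j < size k -> nth 0 k j %| nth 0 k i.
Proof.
have dvd_trans : transitive (fun a b : nat => b %| a).
  by move=> y x z yx zy; apply: dvdn_trans zy yx.
move=> le_ij lt_jk.
by apply: (sorted_leq_nth dvd_trans dvdnn 0 k_chain); rewrite ?inE ?(leq_ltn_trans le_ij).
Qed.

Lemma dvdn_nth_ndvd u j : j < size k -> (u %| nth 0 k j) = (j < ndvd k u).
Proof.
move=> lt_jk; case: (ltnP j (ndvd k u)) => [lt_jn | le_nj].
  by apply/negbFE/(before_find 0 lt_jn).
have has_ndvd : has (fun x => ~~ (u %| x)) k by rewrite has_find (leq_ltn_trans le_nj).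
apply/negbTE; apply: contra (nth_find 0 has_ndvd) => /dvdn_trans; apply.
exact: dvdn_nth_chain.
Qed.

Lemma ndvd_eq u n : n <= size k ->
  (forall j, j < size k -> (u %| nth 0 k j) = (j < n)) -> ndvd k u = n.
Proof.
move=> le_nk dvd_n; apply/eqP; rewrite eqn_leq; apply/andP; split; rewrite leqNgt; apply/negP.
- move=> lt_nd; have lt_k := leq_trans lt_nd (ndvd_le_size k u).
  by have := dvd_n n lt_k; rewrite dvdn_nth_ndvd // lt_nd ltnn.
- move=> lt_dn; have lt_k := leq_trans lt_dn le_nk.
  by have := dvd_n _ lt_k; rewrite dvdn_nth_ndvd // lt_dn ltnn.
Qed.

Lemma ndvd_dvdn u v : u %| v -> ndvd k v <= ndvd k u.
Proof.
move=> dvd_uv; rewrite leqNgt; apply/negP => lt_uv.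
have lt_k : ndvd k u < size k := leq_trans lt_uv (ndvd_le_size k v).
have := dvdn_nth_ndvd v lt_k; rewrite lt_uv => /(dvdn_trans dvd_uv).
by rewrite dvdn_nth_ndvd // ltnn.
Qed.

Lemma ndvd1 : ndvd k 1 = size k.
Proof. by apply: ndvd_eq => // j lt_jk; rewrite dvd1n lt_jk. Qed.

Lemma ndvd_lcm u v : ndvd k (lcmn u v) = minn (ndvd k u) (ndvd k v).
Proof.
apply: ndvd_eq => [|j lt_jk]; first by rewrite geq_min ndvd_le_size.
by rewrite dvdn_lcm !dvdn_nth_ndvd // leq_min.
Qed.

Lemma ndvd_mul_coprime u v : coprime u v -> ndvd k (u * v) = minn (ndvd k u) (ndvd k v).
Proof.
move=> co_uv; apply: ndvd_eq => [|j lt_jk]; first by rewrite geq_min ndvd_le_size.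
by rewrite Gauss_dvd // !dvdn_nth_ndvd // leq_min.
Qed.

Lemma ndvd_mul_part v q : 0 < v -> 1 < q ->
  exists2 p, p \in primes q & ndvd k (v * q`_p) = ndvd k (v * q).
Proof.
move=> v_pos q_gt1; have q_pos := ltnW q_gt1.
have p0q : pdiv q \in primes q by rewrite -pi_pdiv in q_gt1.
have ge_ndvd (p : nat) : ndvd k (v * q) <= ndvd k (v * q`_p).
  by apply: ndvd_dvdn => //; rewrite dvdn_pmul2l ?dvdn_part.
suff /hasP[p pq le_ndvd] : has (fun p : nat => ndvd k (v * q`_p) <= ndvd k (v * q)) (primes q).
  by exists p => //; apply/eqP; rewrite eqn_leq le_ndvd ge_ndvd.
apply/negPn/negP => /hasPn lt_ndvd; set j := ndvd k (v * q) in lt_ndvd.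
have lt_jk : j < size k.
  by apply: leq_trans (ndvd_le_size k (v * q`_(pdiv q))); rewrite ltnNge lt_ndvd.
suff : v * q %| nth 0 k j by rewrite dvdn_nth_ndvd // ltnn.
apply: (dvdn_mul_parts v_pos p0q) => p pq.
by rewrite dvdn_nth_ndvd // ltnNge lt_ndvd.
Qed.

End DivisorChain.

Section GroupRingCoefficients.

Local Open Scope ring_scope.

Lemma sum_sign_lt (R : nzRingType) n m : (m <= n)%N ->
  \sum_(j < n) (-1) ^+ j * (j < m)%:R = (odd m)%:R :> R.
Proof.
move=> le_mn; rewrite -(subnKC le_mn) big_split_ord /=.
rewrite [X in _ + X]big1 => [|j _]; last by rewrite ltnNge leq_addr mulr0.
rewrite addr0 (eq_bigr (fun j : 'I_m => (-1) ^+ j)) => [|j _]; last by rewrite ltn_ord mulr1.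
elim: m {le_mn} => [|m IH]; first by rewrite big_ord0.
by rewrite big_ord_recr /= IH -signr_odd; case: (odd m); rewrite /= ?addrN ?add0r.
Qed.

Section PrimitiveRoot.

Variables (u : nat) (z : algC).
Hypothesis prim_z : u.-primitive_root z.

Lemma Lambda_prim_root m : (0 < m)%N -> Lambda m z = (u %| m)%:R.
Proof. by rewrite /Lambda => -> /=; rewrite (prim_order_dvd prim_z); case: eqP. Qed.

Lemma Psi_prim_root m : Psi m z = (m == u)%:R.
Proof.
rewrite /Psi; have [-> | ne_mu] := eqVneq m u; first by rewrite prim_z.
case: ifP => // prim_m; case/negP: ne_mu.
rewrite eqn_dvd (prim_order_dvd prim_m) (prim_order_dvd prim_z).
by rewrite (prim_expr_order prim_z) (prim_expr_order prim_m) eqxx.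
Qed.

Lemma sum_Psi_prim_root (M : seq nat) : uniq M ->
  \sum_(m <- M) Psi m z = (u \in M)%:R.
Proof.
move=> uniq_M; under eq_bigr do rewrite Psi_prim_root.
case: (boolP (u \in M)) => [uM | uNM].
  by rewrite (bigD1_seq u) //= eqxx big1 ?addr0 // => m /negbTE->.
by rewrite big_seq big1 // => m mM; case: eqP mM uNM => // -> ->.
Qed.

End PrimitiveRoot.

Lemma mem_odd_ndvd (k M : seq nat) :
  (forall j, j \in k -> (0 < j)%N) -> sorted (fun a b => b %| a)%N k -> uniq M ->
  (forall z : algC,
     \sum_(j < size k) (-1) ^+ j * Lambda (nth 0%N k j) z = \sum_(m <- M) Psi m z) ->
  forall u, (0 < u)%N -> (u \in M) = odd (ndvd k u).
Proof.
move=> k_pos k_chain uniq_M sums_eq u u_pos.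
have [z prim_z] := C_prim_root_exists u_pos.
have := sums_eq z; rewrite (sum_Psi_prim_root prim_z uniq_M).
under eq_bigr => j _ do
  rewrite (Lambda_prim_root prim_z) ?k_pos ?mem_nth // dvdn_nth_ndvd //.
rewrite sum_sign_lt ?ndvd_le_size // => /eqP; rewrite eqr_nat => /eqP.
by case: (u \in M); case: odd.
Qed.

End GroupRingCoefficients.

Definition nonp_edge (M : seq nat) (p : nat) : relation nat :=
  fun a b => exists2 q, q <> p & pedge M q a b.

Lemma pedge_min_power (M : seq nat) v p e :
  prime p -> 0 < v -> v \in M -> v * p ^ e \in M -> 0 < e ->
  (forall c, 0 < c < e -> v * p ^ c \notin M) -> pedge M p (v * p ^ e) v.
Proof.
move=> p_pr v_pos vM uM e_pos min_e; split=> //; first by exists e.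
move=> m mM ne_mu ne_mv [dvd_vm dvd_mu].
have [c le_ce Em] := dvdn_mul_pfactor_mid p_pr v_pos dvd_vm dvd_mu.
have c_pos : 0 < c by case: c Em {le_ce} => // /[!(expn0, muln1)].
have lt_ce : c < e.
  by rewrite ltn_neqAle le_ce andbT; apply/eqP => Ece; apply: ne_mu; rewrite Em Ece.
by have := min_e c; rewrite c_pos lt_ce -Em mM => /(_ isT).
Qed.

Definition odd_part_chain (M : seq nat) (o : nat) : seq nat :=
  sort geq [seq x <- M | x`_2^' == o].

Lemma mem_odd_part_chain M o x : (x \in odd_part_chain M o) = (x \in M) && (x`_2^' == o).
Proof. by rewrite mem_sort mem_filter andbC. Qed.

Lemma ppath_odd_part_chain (M : seq nat) o : uniq M -> (forall m, m \in M -> 0 < m) ->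
  has (fun x => x`_2^' == o) M -> ppath M 2 (odd_part_chain M o).
Proof.
move=> uniq_M M_pos /hasP[x0 x0M /eqP odd_x0]; set s := odd_part_chain M o.
have s_sorted : sorted geq s := sort_sorted geq_total _.
have s_uniq : uniq s by rewrite sort_uniq filter_uniq.
split.
- move=> s_nil; have : x0 \in s by rewrite mem_odd_part_chain x0M odd_x0 eqxx.
  by rewrite s_nil.
- by apply/allP => x; rewrite mem_odd_part_chain => /andP[].
move=> i lt_is; set x := nth 0 s i; set y := nth 0 s i.+1.
have xs : x \in s by rewrite mem_nth // ltnW.
have ys : y \in s by rewrite mem_nth.
move: (xs) (ys); rewrite !mem_odd_part_chain => /andP[xM /eqP odd_x] /andP[yM /eqP odd_y].
have [Ex _] := odd_part_decomp (M_pos _ xM); have [Ey odd_o] := odd_part_decomp (M_pos _ yM).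
rewrite odd_x in Ex; rewrite odd_y in Ey odd_o.
have lt_yx : y < x.
  by rewrite ltn_neqAle sorted_geq_nth ?leqnSn // andbT nth_uniq ?(ltnW lt_is) // eqn_leq ltnn.
have lt_log : logn 2 y < logn 2 x.
  by move: lt_yx; rewrite {1}Ex {1}Ey ltn_pmul2r ?(odd_gt0 odd_o) // ltn_exp2l.
have Exy : x = y * 2 ^ (logn 2 x - logn 2 y).
  by rewrite {1}Ex {1}Ey mulnAC -expnD subnKC // ltnW.
split=> //; first by exists (logn 2 x - logn 2 y); rewrite ?subn_gt0.
move=> m mM ne_mx ne_my [dvd_ym dvd_mx]; rewrite Exy in dvd_mx.
have [c _ Em] := dvdn_mul_pfactor_mid (isT : prime 2) (M_pos _ yM) dvd_ym dvd_mx.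
have ms : m \in s by rewrite mem_odd_part_chain mM Em {1}Ey mulnAC -expnD odd_part_pow2_mul ?eqxx.
have lt_ym : y < m.
  by rewrite ltn_neqAle dvdn_leq ?M_pos // andbT; apply/eqP => Eym; apply: ne_my.
have lt_mx : m < x.
  rewrite ltn_neqAle; apply/andP; split; first exact/eqP.
  by rewrite Exy dvdn_leq // muln_gt0 M_pos ?expn_gt0.
by have := sorted_geq_gap s_sorted lt_is ms; rewrite -/x -/y lt_ym lt_mx.
Qed.

Section OddDivisorCounts.

Variables k M : seq nat.
Hypothesis k_chain : sorted (fun a b => b %| a) k.
Hypothesis M_pos : forall m, m \in M -> 0 < m.
Hypothesis mem_M : forall u, 0 < u -> (u \in M) = odd (ndvd k u).

Lemma lcmn_mem m v : m \in M -> v \in M -> lcmn m v \in M.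
Proof.
move=> mM vM; have m_pos := M_pos mM; have v_pos := M_pos vM.
rewrite mem_M ?lcmn_gt0 ?m_pos // ndvd_lcm //.
by rewrite /minn; case: ltnP; rewrite -mem_M.
Qed.

Lemma extend_in_level r v m : prime r -> v \in M -> m \in M ->
  logn r m = logn r v -> ~~ (m %| v) ->
  exists p e, [/\ prime p, p != r, 0 < e & v * p ^ e \in M].
Proof.
move=> r_pr vM mM eq_log m_ndvd_v; have m_pos := M_pos mM; have v_pos := M_pos vM.
set q := lcmn m v %/ v.
have Eq : lcmn m v = v * q by rewrite mulnC divnK // dvdn_lcmr.
have q_pos : 0 < q by move: (lcmn_gt0 m v); rewrite m_pos v_pos Eq muln_gt0 => /andP[].
have q_gt1 : 1 < q.
  rewrite ltn_neqAle eq_sym q_pos andbT; apply: contra m_ndvd_v => /eqP q1.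
  by rewrite -[v]muln1 -q1 -Eq dvdn_lcml.
have [p pq eq_ndvd] := ndvd_mul_part k_chain v_pos q_gt1.
have p_pr : prime p by move: pq; rewrite mem_primes => /andP[].
exists p, (logn p q); split; rewrite ?logn_gt0 //.
  have : logn r (v * q) = logn r v by rewrite -Eq logn_lcm // eq_log maxnn.
  rewrite lognM // -[RHS]addn0 => /addnI log_rq.
  by apply: contraTneq pq => ->; rewrite -logn_gt0 log_rq.
rewrite -p_part mem_M ?muln_gt0 ?v_pos ?part_gt0 // eq_ndvd -Eq -mem_M.
  exact: lcmn_mem.
by rewrite lcmn_gt0 m_pos.
Qed.

Lemma level_top_reach r t : prime r -> t \in M ->
  (forall m, m \in M -> logn r m = logn r t -> m <= t) ->
  forall v, v \in M -> logn r v = logn r t -> clos_refl_trans nat (nonp_edge M r) t v.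
Proof.
move=> r_pr tM t_max v; have [n] := ubnP (t - v).
elim: n v => // n IH v lt_tv_n vM eq_log; have v_pos := M_pos vM.
have [-> | ne_vt] := eqVneq v t; first exact: rt_refl.
have t_ndvd_v : ~~ (t %| v).
  apply: contra ne_vt => /(dvdn_leq v_pos) le_tv.
  by rewrite eqn_leq le_tv t_max.
have [p [e [p_pr ne_pr e_pos uM]]] := extend_in_level r_pr vM tM (esym eq_log) t_ndvd_v.
have : exists e, (0 < e) && (v * p ^ e \in M) by exists e; rewrite e_pos uM.
case/ex_minnP => e1 /andP[e1_pos u1M] e1_min.
have log_u : logn r (v * p ^ e1) = logn r t.
  rewrite lognM ?expn_gt0 ?(prime_gt0 p_pr) // lognX (logn_prime r p_pr).
  by rewrite eq_sym (negbTE ne_pr) muln0 addn0.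
have lt_vu : v < v * p ^ e1 by rewrite ltn_Pmulr // -{1}(expn0 p) ltn_exp2l ?prime_gt1.
apply: rt_trans (IH (v * p ^ e1) _ u1M log_u) (rt_step _ _ _ _ _).
  by have := t_max _ u1M log_u; lia.
exists p; first by apply/eqP.
apply: pedge_min_power => // c /andP[c_pos lt_ce]; apply/negP => cM.
by have := e1_min c; rewrite c_pos cM leqNgt lt_ce => /(_ isT).
Qed.

Lemma exists_level_top r v : v \in M ->
  exists2 t, t \in M &
    logn r t = logn r v /\ forall m, m \in M -> logn r m = logn r v -> m <= t.
Proof.
move=> vM; pose level := [seq m <- M | logn r m == logn r v].
have [|t] := exists_extremum geq_trans geq_total (x0 := v) (s := level).
  by rewrite mem_filter eqxx vM.
rewrite mem_filter => /andP[/eqP log_t tM] t_max.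
by exists t => //; split=> // m mM log_m; apply: t_max; rewrite mem_filter log_m eqxx.
Qed.

Lemma same_pplane_level r v w : prime r -> v \in M -> w \in M ->
  logn r v = logn r w -> same_pplane M r v w.
Proof.
move=> r_pr vM wM log_vw; have [t tM [log_t t_max]] := exists_level_top r vM.
rewrite -log_t in t_max.
have reach_t x : x \in M -> logn r x = logn r v -> clos_refl_trans nat (nonp_edge M r) t x.
  by move=> xM; rewrite -log_t; apply: level_top_reach.
apply: rst_trans (rst_sym _ _ _ _ (clos_rt_clos_rst _ _ _ _ (reach_t v vM erefl))) _.
exact/clos_rt_clos_rst/reach_t.
Qed.

Lemma exists_root v0 : v0 \in M ->
  exists2 m1, m1 \in M &
    (forall m, m \in M -> m <= m1) /\ (forall v, v \in M -> reachable M m1 v).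
Proof.
move=> v0M; have [r lt_max_r r_pr] := prime_above (\max_(m <- M) m).
have log_r0 m : m \in M -> logn r m = 0.
  move=> mM; apply/logn_coprime; rewrite prime_coprime // gtnNdvd ?M_pos //.
  by apply: leq_ltn_trans lt_max_r; apply: leq_bigmax_seq.
have [t tM [_ t_max]] := exists_level_top r v0M.
have {}t_max m : m \in M -> m <= t by move=> mM; rewrite t_max ?log_r0.
exists t => //; split=> // v vM.
apply: clos_rt_incl (level_top_reach r_pr tM _ vM _) => [a b [q _ ?]|m mM _|].
- by exists q.
- exact: t_max.
- by rewrite !log_r0.
Qed.

Lemma exists_odd_level_rep :
  exists2 o, odd o & forall v, v \in M -> 2 ^ logn 2 v * o \in M.
Proof.
pose C := 1 :: [seq o <- M | odd o].
have le_tr : transitive (fun x y => ndvd k x <= ndvd k y) by move=> y x z; apply: leq_trans.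
have le_total : total (fun x y => ndvd k x <= ndvd k y) by move=> x y; apply: leq_total.
have [o oC o_min] := exists_extremum le_tr le_total (mem_head 1 [seq o <- M | odd o]).
have o_cases : o = 1 \/ o \in M /\ odd o.
  by move: oC; rewrite inE mem_filter => /predU1P[-> | /andP[]]; [left | right].
have odd_o : odd o by case: o_cases => [-> | []].
exists o => // v vM; have v_pos := M_pos vM.
have [Ev odd_o'] := odd_part_decomp v_pos.
set a := logn 2 v in Ev *; set o' := v`_2^' in Ev odd_o' *.
have ndvd_2o x : odd x -> ndvd k (2 ^ a * x) = minn (ndvd k (2 ^ a)) (ndvd k x).
  by move=> odd_x; apply: ndvd_mul_coprime => //; rewrite coprimeXl // coprime2n.
have odd_ndvd_v : odd (minn (ndvd k (2 ^ a)) (ndvd k o')) by rewrite -ndvd_2o // -Ev -mem_M.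
rewrite mem_M ?muln_gt0 ?expn_gt0 ?(odd_gt0 odd_o) // ndvd_2o //.
set g := ndvd k (2 ^ a) in odd_ndvd_v *.
have le_gk : g <= size k := ndvd_le_size k _.
case: (leqP g (ndvd k o)) => [le_go | lt_og].
  move: odd_ndvd_v; case: (leqP g (ndvd k o')) => // lt_o'g odd_o'_ndvd.
  have o'C : o' \in C by rewrite inE mem_filter odd_o' mem_M ?odd_gt0 // odd_o'_ndvd orbT.
  by have := o_min o' o'C; lia.
case: o_cases => [o1 | [oM _]]; last by rewrite -mem_M ?M_pos.
by move: lt_og; rewrite o1 ndvd1 // ltnNge le_gk.
Qed.

Hypothesis uniq_M : uniq M.

Lemma exists_spanning_2path v0 : v0 \in M ->
  exists s, ppath M 2 s /\
    forall v, v \in M -> exists2 w, w \in s & same_pplane M 2 v w.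
Proof.
move=> v0M; have [o odd_o rep_M] := exists_odd_level_rep.
exists (odd_part_chain M o); split.
  apply: ppath_odd_part_chain => //; apply/hasP; exists (2 ^ logn 2 v0 * o).
    exact: rep_M.
  by rewrite odd_part_pow2_mul.
move=> v vM; exists (2 ^ logn 2 v * o).
  by rewrite mem_odd_part_chain rep_M // odd_part_pow2_mul ?eqxx.
by apply: (same_pplane_level (r := 2)); rewrite ?rep_M ?logn2_pow2_mul.
Qed.

End OddDivisorCounts.

Local Open Scope ring_scope.

Theorem lemma6p8 (k : seq nat) (M : seq nat) :
  (forall j, j \in k -> (0 < j)%N) ->
  sorted (fun a b => b %| a)%N k ->
  uniq M -> (forall m, m \in M -> (0 < m)%N) ->
  (forall z : algC,
     \sum_(j < size k) (-1) ^+ j * Lambda (nth 0%N k j) z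
     = \sum_(m <- M) Psi m z) ->
  M = [::] \/
  ((exists2 m1, m1 \in M &
      (forall m, m \in M -> (m <= m1)%N) /\
      (forall v, v \in M -> reachable M m1 v)) /\
   (exists s, ppath M 2 s /\
      forall v, v \in M -> exists2 w, w \in s & same_pplane M 2 v w)).
Proof.
move=> k_pos k_chain uniq_M M_pos sums_eq.
have mem_M := mem_odd_ndvd k_pos k_chain uniq_M sums_eq.
case: M uniq_M M_pos mem_M {sums_eq} => [|v0 M'] uniq_M M_pos mem_M; first by left.
right; split.
  exact: (exists_root k_chain M_pos mem_M (mem_head v0 M')).
exact: (exists_spanning_2path k_chain M_pos mem_M uniq_M (mem_head v0 M')).
Qed.
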